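(* For every initial state $x(0)\in\mathbb O^n$, the trajectory $x(t)$ of the PID opinion dynamics almost surely reaches an equilibrium in finite time.
   Context: Let $n\ge 1$, $\mathcal V=\{1,\dots,n\}$, and let $W=(w_{ij})$ be an $n\times n$ row-stochastic matrix (nonnegative entries, each row summing to $1$). The opinion set is a finite set of consecutive integers $\mathbb O=\{k,k+1,\dots,k+s\}$, and $\theta\in\mathbb O$ is a fixed ''truth''. For $x\in\mathbb O^n$, $i\in\mathcal V$, $z\in\mathbb O$, define $C^i_{\mathrm{social}}(z;x)=\sum_{j=1}^n w_{ij}|z-x_j|$ and $C^i_{\mathrm{cog}}(z)=|z-\theta|$, and the Pareto-improvement set $P_i(x)=\{z\in\mathbb O: C^i_{\mathrm{social}}(z;x)\le C^i_{\mathrm{social}}(x_i;x),\ |z-\theta|\le |x_i-\theta|\}$. PID opinion dynamics: starting from $x(0)$, at each time $t+1$ a node $i$ is chosen uniformly at random from $\mathcal V$ (independently over time) and sets $x_i(t+1)$ to an element chosen at random from $P_i(x(t))$, each element of $P_i(x(t))$ having positive probability; all other nodes keep their opinions. An equilibrium is a state $x^*$ with $P_i(x^* )=\{x^*_i\}$ for all $i\in\mathcal V$. *)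

From HB Require Import structures.
From mathcomp Require Import all_boot all_order all_algebra.
From mathcomp Require Import all_classical all_reals all_analysis.
Set Implicit Arguments. Unset Strict Implicit. Unset Printing Implicit Defensive.
Import Order.TTheory GRing.Theory Num.Theory.
Local Open Scope ring_scope.

(* Opinion set O = {k, k+1, ..., k+s}: an opinion is encoded by its offset
   o : 'I_(s.+1), whose integer value is k + o. *)
Definition opin (k : int) (s : nat) (o : 'I_s.+1) : int := k + (o : nat)%:Z.

Definition state (n s : nat) := {ffun 'I_n -> 'I_s.+1}.

Definition row_stochastic (R : realType) (n : nat) (W : 'M[R]_n) : Prop :=
  (forall i j, 0 <= W i j) /\ (forall i, \sum_(j < n) W i j = 1).

Definition Csocial (R : realType) (n s : nat) (k : int) (W : 'M[R]_n)
    (i : 'I_n) (z : 'I_s.+1) (x : state n s) : R :=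
  \sum_(j < n) W i j * `|(opin k z)%:~R - (opin k (x j))%:~R|.

Definition Ccog (k : int) (s : nat) (theta z : 'I_s.+1) : int :=
  `|opin k z - opin k theta|.

Definition Pset (R : realType) (n s : nat) (k : int) (W : 'M[R]_n)
    (theta : 'I_s.+1) (x : state n s) (i : 'I_n) : {set 'I_s.+1} :=
  [set z | (Csocial k W i z x <= Csocial k W i (x i) x)
           && (Ccog k theta z <= Ccog k theta (x i))].

Definition equilibrium (R : realType) (n s : nat) (k : int) (W : 'M[R]_n)
    (theta : 'I_s.+1) (x : state n s) : Prop :=
  forall i : 'I_n, Pset k W theta x i = [set x i].

Definition upd (n s : nat) (x : state n s) (i : 'I_n) (z : 'I_s.+1) : state n s :=
  [ffun j => if j == i then z else x j].

(* q i x z = probability that node i, when chosen in state x, adopts z.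
   Valid iff it is a probability distribution on P_i(x) giving positive
   probability to every element of P_i(x). *)
Definition valid_choice (R : realType) (n s : nat) (k : int) (W : 'M[R]_n)
    (theta : 'I_s.+1) (q : 'I_n -> state n s -> 'I_s.+1 -> R) : Prop :=
  (forall i x z, z \in Pset k W theta x i -> 0 < q i x z) /\
  (forall i x z, z \notin Pset k W theta x i -> q i x z = 0) /\
  (forall i x, \sum_(z < s.+1) q i x z = 1).

(* One-step transition probability of PID dynamics: node i chosen uniformly,
   then z drawn from q i x. *)
Definition PID_kernel (R : realType) (n s : nat)
    (q : 'I_n -> state n s -> 'I_s.+1 -> R) (x y : state n s) : R :=
  \sum_(i < n) (n%:R)^-1 * \sum_(z < s.+1) (if y == upd x i z then q i x z else 0).

(* X is (a realisation of) the PID Markov chain started at x0 on the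
   probability space (T, P): each event {X t = y} is measurable and the
   finite-dimensional distributions are those of the chain. *)
Definition is_PID_process (R : realType) (d : measure_display)
    (T : measurableType d) (P : probability T R) (n s : nat)
    (q : 'I_n -> state n s -> 'I_s.+1 -> R) (x0 : state n s)
    (X : nat -> T -> state n s) : Prop :=
  (forall t y, measurable (X t @^-1` [set y])%classic) /\
  (forall (t : nat) (path : nat -> state n s),
     P [set w | forall m, (m <= t)%N -> X m w = path m]%classic =
     (((path 0%N == x0)%:R * \prod_(m < t) PID_kernel q (path m) (path m.+1)) : R)%:E).

From HB Require Import structures.
From mathcomp Require Import all_boot all_order all_algebra.
From mathcomp Require Import all_classical all_reals all_analysis.
From mathcomp Require Import ring lra zify.
Import Order.TTheory GRing.Theory Num.Theory.
Local Open Scope ring_scope.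

Set Implicit Arguments. Unset Strict Implicit. Unset Printing Implicit Defensive.

(* Let Phi(x) = sum_i |x_i - theta|. A Pareto move never increases Phi, and
   away from equilibria some node has a move that strictly decreases it: if
   z <> x_i is a Pareto improvement at the same distance from theta, then z
   and x_i are symmetric about theta, and by convexity of the social cost
   theta itself is a Pareto improvement. Since q gives probability at least
   p > 0 to every Pareto move, V = 2^Phi satisfies
   E[V(x(t+1)) | x(t) = x] <= (1 - p/(2n)) V(x) at every non-equilibrium x.
   So the expectation of V over the paths that avoided equilibria up to
   time t decays geometrically, and it bounds the probability of those
   paths. *)

Section Potential.
Variables (R : realType) (n s : nat) (k : int) (W : 'M[R]_n) (theta : 'I_s.+1).

Local Notation S := (state n s).
Local Notation Pset := (Pset k W theta).

Definition is_equilibrium (x : S) : bool := [forall i, Pset x i == [set x i]].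

Lemma is_equilibriumP x : reflect (equilibrium k W theta x) (is_equilibrium x).
Proof. by apply: (iffP forallP) => H i; apply/eqP; exact: H. Qed.

Lemma opin_inj : injective (@opin k s).
Proof. by move=> a b; rewrite /opin => h; apply: val_inj => /=; lia. Qed.

Definition dist_theta (z : 'I_s.+1) : nat := `|opin k z - opin k theta|%N.

Lemma dist_theta_eq0 z : (dist_theta z == 0%N) = (z == theta).
Proof. by rewrite /dist_theta absz_eq0 subr_eq0 (inj_eq opin_inj). Qed.

Definition potential (x : S) : nat := (\sum_(i < n) dist_theta (x i))%N.

Lemma Pset_refl (x : S) i : x i \in Pset x i.
Proof. by rewrite inE !lexx. Qed.

Lemma dist_theta_Pset (x : S) i z : z \in Pset x i -> (dist_theta z <= dist_theta (x i))%N.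
Proof. by rewrite inE => /andP [_]; rewrite /Ccog /dist_theta; lia. Qed.

Lemma potential_upd (x : S) i z :
  (potential (upd x i z) + dist_theta (x i) = potential x + dist_theta z)%N.
Proof.
rewrite /potential (bigD1 i) //= [in RHS](bigD1 i) //= ffunE eqxx.
rewrite (eq_bigr (fun j => dist_theta (x j))) => [|j /negbTE ji]; last by rewrite ffunE ji.
by rewrite (addnC (dist_theta z)) addnAC (addnC (dist_theta (x i))).
Qed.

Hypothesis HW : row_stochastic W.

Lemma Csocial_midpoint i (x : S) (m a b : 'I_s.+1) :
  opin k m + opin k m = opin k a + opin k b ->
  Csocial k W i m x *+ 2 <= Csocial k W i a x + Csocial k W i b x.
Proof.
move=> mid; rewrite /Csocial -sumrMnl -big_split /=; apply: ler_sum => j _.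
rewrite -mulrnAr -mulrDr ler_wpM2l //; first by case: HW.
have midR : (opin k m)%:~R + (opin k m)%:~R = (opin k a)%:~R + (opin k b)%:~R :> R.
  by rewrite -!intrD mid.
rewrite -normrMn mulr2n; set y := (opin k (x j))%:~R.
have -> : (opin k m)%:~R - y + ((opin k m)%:~R - y) =
          ((opin k a)%:~R - y) + ((opin k b)%:~R - y) :> R by lra.
exact: ler_normD.
Qed.

Lemma theta_in_Pset (x : S) i z : z \in Pset x i -> z != x i ->
  dist_theta z = dist_theta (x i) -> theta \in Pset x i.
Proof.
rewrite inE => /andP [zsoc _] zx dz; rewrite inE /Ccog subrr normr0 normr_ge0 andbT.
have opin_neq : opin k z != opin k (x i) by rewrite (inj_eq opin_inj).
have mid : opin k theta + opin k theta = opin k (x i) + opin k z.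
  by move: dz opin_neq; rewrite /dist_theta; lia.
have := Csocial_midpoint i x mid; rewrite mulr2n; lra.
Qed.

Lemma exists_descent (x : S) : ~~ is_equilibrium x ->
  exists i z, z \in Pset x i /\ (dist_theta z < dist_theta (x i))%N.
Proof.
rewrite negb_forall => /existsP [i neq].
have /exists_inP [z zP zx] : [exists z in Pset x i, z != x i].
  apply: contraR neq => /exists_inPn xi_only.
  apply/eqP/setP => z; apply/idP/idP => [/xi_only/negPn|]; rewrite inE // => /eqP ->.
  exact: Pset_refl.
have := dist_theta_Pset zP; rewrite leq_eqVlt => /orP [/eqP dz | ]; last by exists i, z.
exists i, theta; split; first exact: theta_in_Pset zP zx dz.
have -> : dist_theta theta = 0%N by apply/eqP; rewrite dist_theta_eq0.
rewrite lt0n -dz dist_theta_eq0; apply: contra zx => /eqP zt.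
by rewrite zt eq_sym -dist_theta_eq0 -dz dist_theta_eq0 zt.
Qed.

End Potential.

Section Kernel.
Variables (R : realType) (n s : nat) (q : 'I_n -> state n s -> 'I_s.+1 -> R).

Local Notation S := (state n s).
Local Notation K := (PID_kernel q).

Lemma PID_kernel_mean (x : S) (f : S -> R) :
  \sum_y K x y * f y = n%:R^-1 * \sum_i \sum_z q i x z * f (upd x i z).
Proof.
rewrite mulr_sumr /PID_kernel.
under eq_bigr do rewrite mulr_suml.
rewrite exchange_big; apply: eq_bigr => i _.
under eq_bigr do rewrite -mulrA mulr_suml.
rewrite -mulr_sumr; congr (_ * _).
rewrite exchange_big; apply: eq_bigr => z _.
by rewrite (bigD1 (upd x i z)) //= eqxx big1 ?addr0 // => y /negbTE ->; rewrite mul0r.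
Qed.

Hypothesis q_ge0 : forall i x z, 0 <= q i x z.

Lemma PID_kernel_ge0 (x y : S) : 0 <= K x y.
Proof.
apply: sumr_ge0 => i _; rewrite mulr_ge0 ?invr_ge0 //.
by apply: sumr_ge0 => z _; case: ifP.
Qed.

End Kernel.

Section Choice.
Variables (R : realType) (n s : nat) (k : int) (W : 'M[R]_n) (theta : 'I_s.+1)
  (q : 'I_n -> state n s -> 'I_s.+1 -> R).
Hypothesis Hq : valid_choice k W theta q.

Local Notation Pset := (Pset k W theta).

Lemma choice_ge0 i x z : 0 <= q i x z.
Proof.
have [q_gt0 [q_out _]] := Hq.
by case: (boolP (z \in Pset x i)) => [/q_gt0/ltW | /q_out ->].
Qed.

Lemma choice_le1 i x z : q i x z <= 1.
Proof.
rewrite -(Hq.2.2 i x) (bigD1 z) //= lerDl.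
by apply: sumr_ge0 => z' _; exact: choice_ge0.
Qed.

Lemma exists_choice_lower_bound : (0 < n)%N ->
  exists p, [/\ 0 < p, p <= 1 & forall i x z, z \in Pset x i -> p <= q i x z].
Proof.
move=> n_gt0; pose x_ord0 : state n s := [ffun => ord0].
pose adm0 := (Ordinal n_gt0, x_ord0, x_ord0 (Ordinal n_gt0)).
pose Admissible := [pred t : 'I_n * state n s * 'I_s.+1 | t.2 \in Pset t.1.2 t.1.1].
have adm0P : Admissible adm0 by rewrite /= Pset_refl.
case: (@arg_minP _ _ _ adm0 Admissible (fun t => q t.1.1 t.1.2 t.2) adm0P).
move=> -[[i x] z] /= zP qmin.
exists (q i x z); split; [exact: Hq.1 | exact: choice_le1 |].
by move=> i' x' z' z'P; apply: (qmin (i', x', z')).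
Qed.

End Choice.

Section Drift.
Variables (R : realType) (n s : nat) (k : int) (W : 'M[R]_n) (theta : 'I_s.+1)
  (q : 'I_n -> state n s -> 'I_s.+1 -> R).
Hypotheses (n_gt0 : (0 < n)%N) (HW : row_stochastic W) (Hq : valid_choice k W theta q).

Local Notation S := (state n s).
Local Notation K := (PID_kernel q).
Local Notation Pset := (Pset k W theta).

Definition lyapunov (x : S) : R := 2%:R ^+ potential k theta x.

Lemma lyapunov_ge1 x : 1 <= lyapunov x.
Proof. by rewrite exprn_ege1 // ler1n. Qed.

Lemma lyapunov_le (x y : S) :
  (potential k theta y <= potential k theta x)%N -> lyapunov y <= lyapunov x.
Proof. by move=> le_yx; rewrite ler_weXn2l // ler1n. Qed.

Lemma lyapunov_halve (x y : S) :
  (potential k theta y < potential k theta x)%N -> lyapunov y *+ 2 <= lyapunov x.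
Proof. by move=> lt_yx; rewrite -mulr_natl -exprS ler_weXn2l // ler1n. Qed.

Variable p : R.
Hypotheses (p_gt0 : 0 < p) (p_lb : forall i x z, z \in Pset x i -> p <= q i x z).

(* A strict descent, made with probability at least p/n, at least halves V. *)
Lemma lyapunov_drift (x : S) : ~~ is_equilibrium k W theta x ->
  \sum_y K x y * lyapunov y <= (1 - p / (2 * n%:R)) * lyapunov x.
Proof.
move=> neq; have [i0 [z0 [z0P descent]]] := exists_descent HW neq.
pose D i z := q i x z * lyapunov x - q i x z * lyapunov (upd x i z).
have D_ge0 i z : 0 <= D i z.
  rewrite subr_ge0; case: (boolP (z \in Pset x i)) => [zP | /Hq.2.1 ->]; last by rewrite !mul0r.
  rewrite ler_wpM2l ?(choice_ge0 Hq) // lyapunov_le //.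
  by have := potential_upd k theta x i z; have := dist_theta_Pset zP; lia.
have D0_big : p * lyapunov x <= D i0 z0 *+ 2.
  have halve : lyapunov (upd x i0 z0) *+ 2 <= lyapunov x.
    by apply: lyapunov_halve; have := potential_upd k theta x i0 z0; lia.
  have := p_lb z0P; have := choice_ge0 Hq i0 x z0; have := lyapunov_ge1 x.
  rewrite /D; rewrite mulr2n in halve *; nra.
have D0_le : D i0 z0 <= \sum_i \sum_z D i z.
  rewrite (bigD1 i0) //= (bigD1 z0) //= -addrA lerDl addr_ge0 //.
    by apply: sumr_ge0 => z _; exact: D_ge0.
  by apply: sumr_ge0 => i _; apply: sumr_ge0 => z _; exact: D_ge0.
have mean : \sum_i \sum_z q i x z * lyapunov (upd x i z) =
            n%:R * lyapunov x - \sum_i \sum_z D i z.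
  have -> : n%:R * lyapunov x = \sum_(i < n) lyapunov x.
    by rewrite sumr_const card_ord mulr_natl.
  rewrite -sumrB; apply: eq_bigr => i _.
  rewrite -[lyapunov x]mul1r -(Hq.2.2 i x) mulr_suml -sumrB.
  by apply: eq_bigr => z _; rewrite /D opprB addrCA subrr addr0.
rewrite PID_kernel_mean mean.
have n_pos : 0 < n%:R :> R by rewrite ltr0n.
have -> : (1 - p / (2 * n%:R)) * lyapunov x =
          n%:R^-1 * (n%:R * lyapunov x - p * lyapunov x / 2).
  by field; rewrite lt0r_neq0.
rewrite ler_wpM2l ?invr_ge0 ?ler0n // lerD2l lerN2; rewrite mulr2n in D0_big; lra.
Qed.

End Drift.

Local Open Scope classical_set_scope.

Lemma preimage_fibres (T I : Type) (Y : T -> I) (A : set I) :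
  Y @^-1` A = \bigcup_(i in A) Y @^-1` [set i].
Proof. by apply/seteqP; split=> [w Aw|w [i Ai /= ->]] //; exists (Y w). Qed.

Lemma measurable_preimage_fin d (T : measurableType d) (I : finType) (Y : T -> I)
    (A : set I) :
  (forall i, measurable (Y @^-1` [set i])) -> measurable (Y @^-1` A).
Proof.
move=> mY; rewrite preimage_fibres.
by apply: fin_bigcup_measurable => [|i _]; [exact: finite_finset | exact: mY].
Qed.

Lemma measureI_preimage_fin d (T : measurableType d) (R : realType)
    (mu : {measure set T -> \bar R}) (I : finType) (Y : T -> I) (B : set T)
    (A : pred I) :
  measurable B -> (forall i, measurable (Y @^-1` [set i])) ->
  mu (B `&` Y @^-1` [set i | A i]) = (\sum_(i | A i) mu (B `&` Y @^-1` [set i]))%E.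
Proof.
move=> mB mY; rewrite preimage_fibres setI_bigcupr measure_fin_bigcup //; last 3 first.
- exact: finite_finset.
- exact: trivIset_preimage1_in.
- by move=> i _; apply: measurableI.
rewrite (fsbigE [seq i <- index_enum I | A i]) ?filter_uniq ?index_enum_uniq //.
- by rewrite big_filter_cond; apply: eq_bigl => i; rewrite mem_setE andbb.
- by move=> i; rewrite /= mem_filter => /andP [].
- by move=> i /= Ai; rewrite mem_filter Ai mem_index_enum.
Qed.

Lemma geometric_bound_le0 (R : realType) (r C l : R) :
  0 <= l < 1 -> (forall t, r <= C * l ^+ t) -> r <= 0.
Proof.
move=> /andP [l_ge0 l_lt1] r_le.
have norm_l_lt1 : `|l| < 1 by rewrite ger0_norm.
apply: (ler_cvg_to (cvg_cst (r : R^o)) (cvg_geometric C norm_l_lt1)).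
exact: nearW.
Qed.

Lemma probability_eq1_geometric d (T : measurableType d) (R : realType)
    (P : probability T R) (G : set T) (C l : R) :
  measurable G -> 0 <= l < 1 -> (forall t, P (~` G) <= (C * l ^+ t)%:E)%E ->
  P G = 1%E.
Proof.
move=> mG l01 PnotG_le; have PnotG_fin := fin_num_measure P _ (measurableC mG).
have /eqP : fine (P (~` G)) = 0.
  apply/le_anti; rewrite fine_ge0 // andbT.
  by apply: (geometric_bound_le0 l01) => t; rewrite -lee_fin fineK.
rewrite fine_eq0 // => /eqP PnotG0.
rewrite -[G]setCK probability_setC; last exact: measurableC.
by rewrite PnotG0 sube0.
Qed.

Section PathLaw.
Variables (R : realType) (n s : nat) (q : 'I_n -> state n s -> 'I_s.+1 -> R)
  (d : measure_display) (T : measurableType d) (P : probability T R)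
  (x0 : state n s) (X : nat -> T -> state n s).
Hypothesis HX : is_PID_process P q x0 X.

Local Notation S := (state n s).
Local Notation K := (PID_kernel q).

Definition path_weight t (g : nat -> S) : R :=
  (g 0%N == x0)%:R * \prod_(m < t) K (g m) (g m.+1).

Definition cylinder t (g : nat -> S) : set T :=
  [set w | forall m, (m <= t)%N -> X m w = g m].

Definition prefix t w : {ffun 'I_t.+1 -> S} := [ffun m : 'I_t.+1 => X m w].

(* Only the values at m <= t matter: inord sends every larger m to 0. *)
Definition path_of t (f : {ffun 'I_t.+1 -> S}) : nat -> S := fun m => f (inord m).

Lemma measurable_X t (A : set S) : measurable (X t @^-1` A).
Proof. by apply: measurable_preimage_fin => y; exact: HX.1. Qed.

Lemma measurable_cylinder t g : measurable (cylinder t g).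
Proof.
have -> : cylinder t g = \bigcap_(m in [set m | (m <= t)%N]) X m @^-1` [set g m] by [].
by apply: bigcap_measurableType => m _; exact: measurable_X.
Qed.

Lemma prob_cylinder t g : P (cylinder t g) = (path_weight t g)%:E.
Proof. exact: HX.2. Qed.

Lemma prefix_fibre t f : prefix t @^-1` [set f] = cylinder t (path_of f).
Proof.
apply/seteqP; split=> [w /= <- m le_mt|w Xw]; first by rewrite /path_of ffunE inordK.
by apply/ffunP => m; rewrite /= ffunE Xw ?(leq_ord m) // /path_of inord_val.
Qed.

Lemma measurable_prefix_fibre t f : measurable (prefix t @^-1` [set f]).
Proof. by rewrite prefix_fibre; exact: measurable_cylinder. Qed.

Lemma measurable_prefix t (A : set {ffun 'I_t.+1 -> S}) : measurable (prefix t @^-1` A).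
Proof. by apply: measurable_preimage_fin; exact: measurable_prefix_fibre. Qed.

Lemma cylinderS t g y :
  X t.+1 @^-1` [set y] `&` cylinder t g =
  cylinder t.+1 (fun m => if (m <= t)%N then g m else y).
Proof.
apply/seteqP; split=> [w [/= Xy Xg] m|w Xg].
  rewrite leq_eqVlt ltnS => /orP [/eqP -> | le_mt]; first by rewrite ltnn.
  by rewrite le_mt; exact: Xg.
split=> [|m le_mt]; first by rewrite /= Xg // ltnn.
by rewrite Xg ?le_mt // (leq_trans le_mt).
Qed.

Lemma path_weightS t g y :
  path_weight t.+1 (fun m => if (m <= t)%N then g m else y) =
  path_weight t g * K (g t) y.
Proof.
rewrite /path_weight big_ord_recr /= leqnn ltnn mulrA; congr (_ * _ * _).
by apply: eq_bigr => m _; rewrite ltnW // ltn_ord.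
Qed.

Lemma prob_prefix_fibre t f :
  P (prefix t @^-1` [set f]) = (path_weight t (path_of f))%:E.
Proof. by rewrite prefix_fibre prob_cylinder. Qed.

Lemma prob_prefix_fibre_next t f y :
  P (X t.+1 @^-1` [set y] `&` prefix t @^-1` [set f]) =
  (path_weight t (path_of f) * K (f ord_max) y)%:E.
Proof.
rewrite prefix_fibre cylinderS prob_cylinder path_weightS /path_of.
by congr (_ * K (f _) y)%:E; apply: val_inj; rewrite /= inordK.
Qed.

Lemma prob_prefix t (F : pred {ffun 'I_t.+1 -> S}) :
  P (prefix t @^-1` [set f | F f]) = (\sum_(f | F f) path_weight t (path_of f))%:E.
Proof.
rewrite -[prefix t @^-1` _]setTI measureI_preimage_fin //; last exact: measurable_prefix_fibre.
by rewrite -sumEFin; apply: eq_bigr => f _; rewrite setTI; exact: prob_prefix_fibre.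
Qed.

Lemma prob_prefix_next t (F : pred {ffun 'I_t.+1 -> S}) y :
  P (X t.+1 @^-1` [set y] `&` prefix t @^-1` [set f | F f]) =
  (\sum_(f | F f) path_weight t (path_of f) * K (f ord_max) y)%:E.
Proof.
rewrite measureI_preimage_fin //; [|exact: measurable_X|exact: measurable_prefix_fibre].
by rewrite -sumEFin; apply: eq_bigr => f _; exact: prob_prefix_fibre_next.
Qed.

Definition stay_mass (Q : pred S) t x : R :=
  \sum_(f : {ffun 'I_t.+1 -> S} | [forall m, Q (f m)] && (f ord_max == x))
    path_weight t (path_of f).

Lemma stay_mass_out (Q : pred S) t x : ~~ Q x -> stay_mass Q t x = 0.
Proof.
move=> Qx; apply: big1 => f /andP [/forallP /(_ ord_max) + /eqP fx].
by rewrite fx (negbTE Qx).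
Qed.

Lemma prob_prefix_stay (Q : pred S) t :
  P (prefix t @^-1` [set f | [forall m, Q (f m)]]) = (\sum_x stay_mass Q t x)%:E.
Proof.
by rewrite prob_prefix (partition_big (fun f : {ffun 'I_t.+1 -> S} => f ord_max) predT).
Qed.

Lemma prefixS_stay (Q : pred S) t y : Q y ->
  prefix t.+1 @^-1` [set f | [forall m, Q (f m)] && (f ord_max == y)] =
  X t.+1 @^-1` [set y] `&` prefix t @^-1` [set f | [forall m, Q (f m)]].
Proof.
move=> Qy; apply/seteqP; split=> w /=.
  rewrite ffunE => /andP [/forallP Qw /eqP Xy]; split=> //.
  by apply/forallP => m; have := Qw (widen_ord (leqnSn _) m); rewrite !ffunE.
move=> [Xy /forallP Qw]; rewrite ffunE Xy eqxx andbT; apply/forallP => m.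
rewrite ffunE; have [lt_mt | ] := ltnP m t.+1; first by have := Qw (Ordinal lt_mt); rewrite ffunE.
move=> le_tm; have -> : nat_of_ord m = t.+1 by have := ltn_ord m; lia.
by rewrite Xy.
Qed.

Lemma stay_massS (Q : pred S) t y :
  Q y -> stay_mass Q t.+1 y = \sum_x stay_mass Q t x * K x y.
Proof.
move=> Qy; apply: EFin_inj; rewrite -prob_prefix prefixS_stay // prob_prefix_next.
rewrite (partition_big (fun f : {ffun 'I_t.+1 -> S} => f ord_max) predT) //=; congr EFin.
by apply: eq_bigr => x _; rewrite mulr_suml; apply: eq_bigr => f /andP [_ /eqP ->].
Qed.

Hypothesis q_ge0 : forall i x z, 0 <= q i x z.

Lemma stay_mass_ge0 (Q : pred S) t x : 0 <= stay_mass Q t x.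
Proof.
apply: sumr_ge0 => f _; rewrite mulr_ge0 //.
by apply: prodr_ge0 => m _; exact: PID_kernel_ge0.
Qed.

End PathLaw.

Section Absorption.
Variables (R : realType) (n s : nat) (k : int) (W : 'M[R]_n) (theta : 'I_s.+1)
  (q : 'I_n -> state n s -> 'I_s.+1 -> R)
  (d : measure_display) (T : measurableType d) (P : probability T R)
  (x0 : state n s) (X : nat -> T -> state n s).
Hypotheses (n_gt0 : (0 < n)%N) (HW : row_stochastic W)
  (Hq : valid_choice k W theta q) (HX : is_PID_process P q x0 X).
Variable p : R.
Hypotheses (p_gt0 : 0 < p) (p_le1 : p <= 1)
  (p_lb : forall i x z, z \in Pset k W theta x i -> p <= q i x z).

Local Notation K := (PID_kernel q).
Local Notation avoid := (predC (is_equilibrium k W theta)).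
Local Notation mass := (stay_mass q x0 avoid).
Local Notation V := (lyapunov R k theta).

Definition avoid_energy t : R := \sum_x mass t x * V x.

Lemma drift_factor_bounds : 0 <= 1 - p / (2 * n%:R) < 1.
Proof.
have c_gt0 : 0 < p / (2 * n%:R) by rewrite divr_gt0 // mulr_gt0 // ltr0n.
have c_le1 : p / (2 * n%:R) <= 1.
  by rewrite ler_pdivrMr ?mulr_gt0 ?ltr0n // mul1r (le_trans p_le1) // -natrM ler1n muln_gt0.
by apply/andP; split; lra.
Qed.

Lemma avoid_energyS t : avoid_energy t.+1 <= (1 - p / (2 * n%:R)) * avoid_energy t.
Proof.
have mass_ge0 := stay_mass_ge0 x0 (choice_ge0 Hq).
have K_ge0 := PID_kernel_ge0 (choice_ge0 Hq).
apply: (@le_trans _ _ (\sum_y (\sum_x mass t x * K x y) * V y)).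
  apply: ler_sum => y _; rewrite ler_wpM2r ?(le_trans ler01 (lyapunov_ge1 _ _ _ _)) //.
  have [Qy | nQy] := boolP (avoid y); first by rewrite (stay_massS HX).
  by rewrite stay_mass_out // sumr_ge0 // => x _; rewrite mulr_ge0.
under eq_bigr do rewrite mulr_suml.
rewrite exchange_big /= mulr_sumr; apply: ler_sum => x _.
have [Qx | nQx] := boolP (avoid x); last first.
  by rewrite stay_mass_out // mul0r mulr0 big1 // => y _; rewrite !mul0r.
under eq_bigr do rewrite -mulrA.
by rewrite -mulr_sumr mulrCA ler_wpM2l // (lyapunov_drift n_gt0 HW Hq p_gt0 p_lb).
Qed.

Lemma avoid_energy_geometric t :
  avoid_energy t <= avoid_energy 0 * (1 - p / (2 * n%:R)) ^+ t.
Proof.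
have /andP [c_ge0 _] := drift_factor_bounds.
elim: t => [|t IH]; first by rewrite expr0 mulr1.
apply: le_trans (avoid_energyS t) _.
by rewrite exprS mulrCA ler_wpM2l.
Qed.

Lemma prob_avoid_le t :
  (P (prefix X t @^-1` [set f | [forall m, avoid (f m)]]) <=
   (avoid_energy 0 * (1 - p / (2 * n%:R)) ^+ t)%:E)%E.
Proof.
rewrite (prob_prefix_stay HX) lee_fin; apply: le_trans (avoid_energy_geometric t).
apply: ler_sum => x _; rewrite ler_peMr ?lyapunov_ge1 //.
by apply: stay_mass_ge0 => i y z; exact: (choice_ge0 Hq i y z).
Qed.

End Absorption.

Theorem theorem2 (R : realType) (n s : nat) (k : int) (W : 'M[R]_n)
    (theta : 'I_s.+1) (q : 'I_n -> state n s -> 'I_s.+1 -> R)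
    (d : measure_display) (T : measurableType d) (P : probability T R)
    (x0 : state n s) (X : nat -> T -> state n s) :
  (0 < n)%N ->
  row_stochastic W ->
  valid_choice k W theta q ->
  is_PID_process P q x0 X ->
  P [set w | exists t : nat, equilibrium k W theta (X t w)]%classic = 1%E.
Proof.
move=> n_gt0 HW Hq HX.
have [p [p_gt0 p_le1 p_lb]] := exists_choice_lower_bound Hq n_gt0.
set G := [set w | exists t, equilibrium k W theta (X t w)].
have mG : measurable G.
  have -> : G = \bigcup_t X t @^-1` [set x | equilibrium k W theta x].
    by apply/seteqP; split=> w [t]; exists t.
  by apply: bigcupT_measurable => t; exact: (measurable_X HX).
apply: (probability_eq1_geometric mG (drift_factor_bounds n_gt0 p_gt0 p_le1)) => t.
apply: le_trans (prob_avoid_le n_gt0 HW Hq HX p_gt0 p_le1 p_lb t).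
apply: le_measure; rewrite ?inE; [exact: measurableC | exact: (measurable_prefix HX) |].
move=> w notG; apply/forallP => m; rewrite ffunE.
by apply/is_equilibriumP => eqm; apply: notG; exists m.
Qed.
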